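(* Let $G$ be a $c$-almost-complete graph on $n$ vertices. Then for every integer $m$ with $m\ge3$ and $2c+2\le m\le n$, $G$ contains a cycle of length exactly $m$.
   Context: A graph on $n$ vertices is $c$-almost-complete if its minimum degree is at least $(n-1)-c$. *)

From mathcomp Require Import all_boot.
Set Implicit Arguments. Unset Strict Implicit. Unset Printing Implicit Defensive.

Definition simple_graph (T : finType) (e : rel T) : Prop :=
  symmetric e /\ irreflexive e.

Definition deg (T : finType) (e : rel T) (v : T) : nat := #|[set u | e v u]|.

(* c-almost-complete: minimum degree at least (n-1) - c, n = #|T|.
   Written as deg v + c >= n - 1 to avoid truncated subtraction. *)
Definition almost_complete (T : finType) (e : rel T) (c : nat) : Prop :=
  forall v : T, #|T| - 1 <= deg e v + c.

Definition has_cycle_of_length (T : finType) (e : rel T) (m : nat) : Prop :=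
  exists s : seq T, [/\ size s = m, 3 <= m, uniq s & cycle e s].

(* Any m vertices span a subgraph in which every vertex has at least m/2
   neighbours, because a vertex misses at most c + 1 vertices (itself
   included) and m >= 2c + 2.  Such a Dirac subgraph is Hamiltonian: arrange
   its vertices cyclically and count the consecutive pairs that are not
   edges.  If some pair (z, x) is a gap, the degree condition yields a vertex
   y adjacent to x whose predecessor y' is adjacent to z; reversing the arc
   from y to z replaces the pairs (y', y) and (z, x) by the edges (y', z) and
   (y, x), so the number of gaps drops.  At zero gaps the arrangement is an
   m-cycle. *)
From mathcomp Require Import all_boot.
From mathcomp Require Import zify.
Set Implicit Arguments. Unset Strict Implicit.

Section Gaps.

Variables (T : finType) (e : rel T).

Fixpoint path_gaps (x : T) (p : seq T) : nat :=
  if p is y :: q then ~~ e x y + path_gaps y q else 0.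

Definition cycle_gaps (s : seq T) : nat :=
  if s is x :: p then path_gaps x (rcons p x) else 0.

Lemma path_gaps_cat x p1 p2 :
  path_gaps x (p1 ++ p2) = path_gaps x p1 + path_gaps (last x p1) p2.
Proof. by elim: p1 x => [|y p IHp] x //=; rewrite IHp addnA. Qed.

Lemma path_gaps_rcons x p z :
  path_gaps x (rcons p z) = path_gaps x p + ~~ e (last x p) z.
Proof. by rewrite -cats1 path_gaps_cat /= addn0. Qed.

Lemma path_gapsE0 x p : path e x p = (path_gaps x p == 0).
Proof. by elim: p x => [|y p IHp] x //=; rewrite IHp; case: (e x y). Qed.

Lemma cycle_gapsE0 s : cycle e s = (cycle_gaps s == 0).
Proof. by case: s => [|x p] //=; rewrite -path_gapsE0. Qed.

Lemma last_rev_belast (z : T) p : last (last z p) (rev (belast z p)) = z.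
Proof.
rewrite -[LHS]/(last z (last z p :: rev (belast z p))) -rev_rcons -lastI.
by rewrite rev_cons last_rcons.
Qed.

Lemma path_gaps_split x p : 0 < path_gaps x p ->
  exists p1 y p2, p = p1 ++ y :: p2 /\ ~~ e (last x p1) y.
Proof.
elim: p x => [|y p IHp] x //=.
case exy: (e x y) => /= gaps_pos; last by exists [::], y, p; rewrite exy.
have [p1 [z [p2 [-> gap_z]]]] := IHp y gaps_pos.
by exists (y :: p1), z, p2.
Qed.

Lemma cycle_gaps_rot_gap s : 0 < cycle_gaps s ->
  exists x p, [/\ perm_eq (x :: p) s, cycle_gaps (x :: p) = cycle_gaps s &
                 ~~ e (last x p) x].
Proof.
case: s => [|x p] //=; rewrite path_gaps_rcons.
case exl: (e (last x p) x); last first.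
  by move=> _; exists x, p; rewrite path_gaps_rcons exl.
rewrite addn0 => /path_gaps_split [p1 [y [p2 [def_p gap_y]]]].
exists y, (p2 ++ x :: p1); split.
- by rewrite def_p -cat_cons (perm_catC (y :: p2)) -cat_cons.
- have last_p : last x p = last y p2 by rewrite def_p last_cat.
  rewrite def_p !rcons_cat /= !path_gaps_cat /= !path_gaps_rcons ?last_cat /=.
  by rewrite -last_p exl /=; lia.
- by rewrite last_cat.
Qed.

Lemma last_take (x : T) p k : k <= size p ->
  last x (take k p) = nth x (x :: p) k.
Proof.
elim: p x k => [|y p IHp] x [|k] //= le_k.
by rewrite IHp // (set_nth_default x).
Qed.

Hypotheses (e_sym : symmetric e) (e_irr : irreflexive e).

Lemma path_gaps_rev x p :
  path_gaps (last x p) (rev (belast x p)) = path_gaps x p.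
Proof.
elim: p x => [|y p IHp] x //=.
by rewrite rev_cons path_gaps_rcons IHp last_rev_belast e_sym addnC.
Qed.

Lemma count_neighbours_nth x p :
  count (e x) (x :: p) = count (fun k => e x (nth x p k)) (iota 0 (size p)).
Proof. by rewrite /= e_irr -[in LHS](mkseq_nth x p) /mkseq count_map. Qed.

Lemma count_neighbours_nth_pred x p :
  count (e (last x p)) (x :: p) =
  count (fun k => e (nth x (x :: p) k) (last x p)) (iota 0 (size p)).
Proof.
have def_xp : x :: p = rcons (belast x p) (last x p) by rewrite lastI.
have size_b : size (belast x p) = size p by rewrite size_belast.
rewrite [in LHS]def_xp -cats1 count_cat /= e_irr !addn0.
rewrite -[in LHS](mkseq_nth x (belast x p)) /mkseq count_map size_b.
apply: eq_in_count => k; rewrite mem_iota add0n /= => lt_k.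
by rewrite def_xp nth_rcons size_b lt_k e_sym.
Qed.

Lemma cycle_gaps_decrease x p :
  ~~ e (last x p) x ->
  size (x :: p) <= 2 * count (e x) (x :: p) ->
  size (x :: p) <= 2 * count (e (last x p)) (x :: p) ->
  exists2 s, perm_eq s (x :: p) & cycle_gaps s < cycle_gaps (x :: p).
Proof.
move=> gap_zx deg_x deg_z; set z := last x p in gap_zx deg_z.
pose A k := e x (nth x p k); pose B k := e (nth x (x :: p) k) z.
have /hasP [k] : has (predI A B) (iota 0 (size p)).
  have count_A : count (e x) (x :: p) = count A (iota 0 (size p)).
    exact: count_neighbours_nth.
  have count_B : count (e z) (x :: p) = count B (iota 0 (size p)).
    exact: count_neighbours_nth_pred.
  have := count_predUI A B (iota 0 (size p)).
  have := count_size (predU A B) (iota 0 (size p)).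
  move: deg_x deg_z; rewrite has_count size_iota count_A count_B /=; lia.
rewrite mem_iota add0n => lt_k /andP [e_xy e_y'z]; rewrite /A /B in e_xy e_y'z.
have def_p : p = take k p ++ nth x p k :: drop k.+1 p.
  by rewrite -drop_nth ?cat_take_drop.
set a := take k p in def_p; set y := nth x p k in e_xy def_p.
set b := drop k.+1 p in def_p.
have def_z : z = last y b by rewrite /z {1}def_p last_cat.
have last_a : last x a = nth x (x :: p) k by apply: last_take; lia.
exists (x :: a ++ rev (y :: b)).
  by rewrite [in X in perm_eq _ X]def_p perm_cons perm_cat2l perm_rev.
rewrite [in X in _ < X]/cycle_gaps [in X in _ < X]def_p /= !rcons_cat.
rewrite !path_gaps_cat /= !path_gaps_rcons (lastI y b) rev_rcons /=.
rewrite last_rev_belast path_gaps_rev -def_z last_a e_y'z e_sym e_xy.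
by rewrite (negbTE gap_zx) /=; lia.
Qed.

Lemma dirac_perm_cycle s :
  (forall v, v \in s -> size s <= 2 * count (e v) s) ->
  exists2 s', perm_eq s' s & cycle e s'.
Proof.
move: {2}(cycle_gaps s) (leqnn (cycle_gaps s)) => n.
elim: n s => [|n IHn] s le_gaps dirac_s.
  by exists s; rewrite // cycle_gapsE0 -leqn0.
have [gaps0 | gaps_pos] := posnP (cycle_gaps s).
  by apply: (IHn s) => //; rewrite gaps0.
have [x [p [perm_xp gaps_xp gap_zx]]] := cycle_gaps_rot_gap gaps_pos.
have dirac_xp v : v \in s -> size (x :: p) <= 2 * count (e v) (x :: p).
  by move=> s_v; rewrite (perm_size perm_xp) (permP perm_xp) dirac_s.
have s_x : x \in s by rewrite -(perm_mem perm_xp) mem_head.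
have s_z : last x p \in s by rewrite -(perm_mem perm_xp) mem_last.
have [s' perm_s' lt_gaps] := cycle_gaps_decrease gap_zx (dirac_xp _ s_x)
  (dirac_xp _ s_z).
have perm_s's : perm_eq s' s := perm_trans perm_s' perm_xp.
have [s'' perm_s'' cycle_s''] : exists2 s'', perm_eq s'' s' & cycle e s''.
  apply: IHn; first by rewrite -ltnS (leq_trans lt_gaps) // gaps_xp.
  move=> v; rewrite (perm_size perm_s's) (permP perm_s's) (perm_mem perm_s's).
  exact: dirac_s.
by exists s''; first exact: perm_trans perm_s'' perm_s's.
Qed.

End Gaps.

Lemma almost_complete_count_neighbours (T : finType) (e : rel T) c s v :
  almost_complete e c -> uniq s -> size s <= count (e v) s + c.+1.
Proof.
move=> ac uniq_s.
have le_nonadj : #|e v| + count (predC (e v)) s <= #|T|.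
  rewrite -(cardC (e v)) leq_add2l -size_filter cardE.
  apply: uniq_leq_size; first exact: filter_uniq.
  by move=> u; rewrite mem_filter mem_enum => /andP [].
have deg_v : deg e v = #|e v| by apply: eq_card => u; rewrite inE.
rewrite -(count_predC (e v) s) leq_add2l; have := ac v; lia.
Qed.

Theorem corollary7p2 (T : finType) (e : rel T) (c : nat) :
  simple_graph e -> almost_complete e c ->
  forall m : nat, 3 <= m -> 2 * c + 2 <= m -> m <= #|T| ->
  has_cycle_of_length e m.
Proof.
move=> [e_sym e_irr] ac m ge3_m ge_m le_m.
set S := take m (enum T).
have size_S : size S = m by rewrite size_takel // -cardE.
have uniq_S : uniq S by rewrite take_uniq // enum_uniq.
have dirac_S v : v \in S -> size S <= 2 * count (e v) S.
  move=> _; have := almost_complete_count_neighbours v ac uniq_S.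
  by rewrite size_S; lia.
have [s perm_s cycle_s] := dirac_perm_cycle e_sym e_irr dirac_S.
exists s; split => //; first by rewrite (perm_size perm_s).
by rewrite (perm_uniq perm_s).
Qed.
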